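(* Let $\delta>0$, $T\ge2$, and suppose the step sizes are $\eta_k=\dfrac{1}{\delta\log T\log(k+3)\sqrt{k+1}}$. For $1\le t\le T$ let $u_t:=\max\{0,\lceil\log(C\sqrt t)/\log(1/\alpha)\rceil\}$ (so that $C\alpha^{u_t}\le1/\sqrt t$). Then \begin{align*} \mathbb E\Big[\sum_{k=0}^{t-1}\eta_k\langle\boldsymbol b_k,\boldsymbol\theta_k-\boldsymbol\theta^*\rangle\Big] &\le 8C\,\mathbb E\Big[d_0\ell_0\sum_{k=0}^{u_t}\frac{1}{\delta\log T\log(k+3)\sqrt{k+1}}\Big] +8\,\mathbb E\Big[\sum_{k=u_t+1}^{t-1}\frac{d_{k-u_t}\ell_{k-u_t}}{\delta\log T\log(k+3)\sqrt{k+1}\sqrt t}\Big]\\ &\quad+\frac{2}{\delta^2\log^2T}\,\mathbb E\Big[\sum_{k=0}^{u_t}\frac{\ell_k+2\phi_\infty^2d_0}{\sqrt{k+1}\log(k+3)}\sum_{i=1}^{k}\frac{\ell_{i-1}}{\log(i+2)\sqrt i}\Big]\\ &\quad+\frac{2}{\delta^2\log^2T}\,\mathbb E\Big[\sum_{k=u_t+1}^{t-1}\frac{\ell_k+2\phi_\infty^2d_{k-u_t}}{\log(k+3)\log(k-u_t+3)\sqrt{k+1}}\sum_{i=k-u_t+1}^{k}\frac{\ell_{i-1}}{\sqrt i}\Big]. \end{align*}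
   Context: Setting. $\mathcal S$ finite; $\boldsymbol P$ irreducible aperiodic with stationary distribution $\boldsymbol\pi$; $C>0,\alpha\in(0,1)$ with $\|\boldsymbol P^t(s,\cdot)-\boldsymbol\pi\|_{\mathrm{TV}}\le C\alpha^t$ for all $s,t$. Rewards $0\le r(s,s')\le r_\infty$, discount $\gamma\in(0,1)$, features $\|\boldsymbol\phi(s)\|_2\le\phi_\infty$, $\boldsymbol\theta^*$ the TD fixed point ($\bar{\boldsymbol g}(\boldsymbol\theta^* )=0$). For $o=(s,s')$, $\boldsymbol g(\boldsymbol\theta,o)=(r(s,s')+\gamma\boldsymbol\phi(s')^\top\boldsymbol\theta-\boldsymbol\phi(s)^\top\boldsymbol\theta)\boldsymbol\phi(s)$, $\bar{\boldsymbol g}(\boldsymbol\theta)=\sum_{s,s'}\pi(s)P(s,s')\boldsymbol g(\boldsymbol\theta,(s,s'))$. Trajectory $s_0,s_1,\dots$, $O_t=(s_t,s_{t+1})$, $\mathcal F_t=\sigma(O_0,\dots,O_t)$. TD(0): $\boldsymbol\theta_0=0$, $\boldsymbol\theta_{t+1}=\boldsymbol\theta_t+\eta_t\boldsymbol g(\boldsymbol\theta_t,O_t)$. Notation: $d_t=\|\boldsymbol\theta_t-\boldsymbol\theta^*\|_2$, $\ell_t=r_\infty\phi_\infty+2\phi_\infty^2\|\boldsymbol\theta_t\|_2$, $\boldsymbol b_t=\mathbb E[\boldsymbol g(\boldsymbol\theta_t,O_t)\mid\mathcal F_{t-1}]-\bar{\boldsymbol g}(\boldsymbol\theta_t)$.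 Logarithms natural; empty sums are $0$. *)

From mathcomp Require Import all_boot all_order all_algebra.
From mathcomp Require Import all_classical all_reals all_analysis.
Set Implicit Arguments. Unset Strict Implicit. Unset Printing Implicit Defensive.
Import Order.TTheory GRing.Theory Num.Theory.
Local Open Scope ring_scope.

Definition vdot (R : realType) (d : nat) (u v : 'rV[R]_d) : R :=
  \sum_(i < d) u ord0 i * v ord0 i.
Definition vnorm (R : realType) (d : nat) (u : 'rV[R]_d) : R := Num.sqrt (vdot u u).

Fixpoint Pn (R : realType) (S : finType) (P : S -> S -> R) (t : nat) (s s' : S) : R :=
  match t with
  | 0 => if s == s' then 1 else 0
  | t'.+1 => \sum_(x : S) Pn P t' s x * P x s'
  end.

Definition tv_dist (R : realType) (S : finType) (p q : S -> R) : R :=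
  2^-1 * \sum_(s : S) `|p s - q s|.

Definition is_pdistr (R : realType) (S : finType) (p : S -> R) : Prop :=
  (forall s, 0 <= p s) /\ \sum_(s : S) p s = 1.

Definition stochastic (R : realType) (S : finType) (P : S -> S -> R) : Prop :=
  forall s, is_pdistr (P s).

Definition irreducible (R : realType) (S : finType) (P : S -> S -> R) : Prop :=
  forall s s', exists t, 0 < Pn P t s s'.

Definition aperiodic (R : realType) (S : finType) (P : S -> S -> R) : Prop :=
  forall s (m : nat), (forall t, (0 < t)%N -> 0 < Pn P t s s -> (m %| t)%N) -> m = 1%N.

Definition stationary (R : realType) (S : finType) (P : S -> S -> R) (pi : S -> R) : Prop :=
  is_pdistr pi /\ forall s', \sum_(s : S) pi s * P s s' = pi s'.

Definition td_g (R : realType) (S : finType) (d : nat) (r : S -> S -> R) (gamma : R)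
  (phi : S -> 'rV[R]_d) (theta : 'rV[R]_d) (s s' : S) : 'rV[R]_d :=
  (r s s' + gamma * vdot (phi s') theta - vdot (phi s) theta) *: phi s.

Definition td_gbar (R : realType) (S : finType) (d : nat) (pi : S -> R) (P : S -> S -> R)
  (r : S -> S -> R) (gamma : R) (phi : S -> 'rV[R]_d) (theta : 'rV[R]_d) : 'rV[R]_d :=
  \sum_(s : S) \sum_(s' : S) (pi s * P s s') *: td_g r gamma phi theta s s'.

Fixpoint td_iter (R : realType) (S : finType) (d : nat)
  (g : 'rV[R]_d -> S -> S -> 'rV[R]_d) (eta : nat -> R) (s : nat -> S) (k : nat) : 'rV[R]_d :=
  match k with
  | 0 => 0
  | k'.+1 => td_iter g eta s k' + eta k' *: g (td_iter g eta s k') (s k') (s k'.+1)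
  end.

Definition path_of (S : finType) (N : nat) (x : {ffun 'I_N.+1 -> S}) : nat -> S :=
  fun i => x (inord i).

Definition path_weight (R : realType) (S : finType) (mu : S -> R) (P : S -> S -> R)
  (N : nat) (x : {ffun 'I_N.+1 -> S}) : R :=
  mu (path_of x 0) * \prod_(i < N) P (path_of x i) (path_of x i.+1).

(* Expectation of a functional of the trajectory depending only on s_0..s_N. *)
Definition Ex (R : realType) (S : finType) (mu : S -> R) (P : S -> S -> R) (N : nat)
  (F : (nat -> S) -> R) : R :=
  \sum_(x : {ffun 'I_N.+1 -> S}) path_weight mu P x * F (path_of x).

(* Conditional expectation of a vector functional F of s_0..s_N given
   sigma(s_0, ..., s_{m-1}) (m = 0: trivial sigma-algebra), evaluated at trajectory s. *)
Definition condEx (R : realType) (S : finType) (d : nat) (mu : S -> R) (P : S -> S -> R)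
  (N m : nat) (F : (nat -> S) -> 'rV[R]_d) (s : nat -> S) : 'rV[R]_d :=
  let A := [pred x : {ffun 'I_N.+1 -> S} |
             [forall i : 'I_N.+1, (i < m)%N ==> (x i == s i)]] in
  (\sum_(x in A) path_weight mu P x)^-1 *: \sum_(x in A) path_weight mu P x *: F (path_of x).

Definition ut (R : realType) (C alpha : R) (t : nat) : nat :=
  `|Num.max 0%Z (Num.ceil (ln (C * Num.sqrt t%:R) / ln alpha^-1))|%N.

From mathcomp Require Import all_boot all_order all_algebra.
From mathcomp Require Import all_classical all_reals all_analysis.
From mathcomp Require Import ring lra.
Import Order.TTheory GRing.Theory Num.Theory.
Set Implicit Arguments. Unset Strict Implicit. Unset Printing Implicit Defensive.
Local Open Scope ring_scope.

(* By the tower property, E<b_k, θ_k - θ*> is the expected gap between the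
   one-step quantity Φ(θ_k, O_k) := <g(θ_k, O_k), θ_k - θ*> and its stationary
   average.  Freeze the parameter at an earlier time j: θ_k - θ_j is bounded by
   Σ_{j<=i<k} η_i ℓ_i and Φ is Lipschitz in θ with constant ℓ_k + 2φ²d_j, so
   replacing θ_k by θ_j costs twice their product.  With θ_j frozen, the Markov
   property turns the remaining gap into an integral against P^{k-j}(s_j,·) - π
   of a function bounded by ℓ_j d_j, which the mixing bound controls by
   2Cα^{k-j} ℓ_j d_j.  Choosing j = 0 for k <= u_t and j = k - u_t otherwise,
   where Cα^{u_t} <= 1/√t, and summing against the step sizes gives the four
   terms. *)

Section EuclideanRow.
Variables (R : realType) (d : nat).
Implicit Types (u v w : 'rV[R]_d).

Lemma vdotC u v : vdot u v = vdot v u.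
Proof. by apply: eq_bigr => i _; rewrite mulrC. Qed.

Lemma vdotDl u v w : vdot (u + v) w = vdot u w + vdot v w.
Proof. by rewrite /vdot -big_split; apply: eq_bigr => i _; rewrite mxE mulrDl. Qed.

Lemma vdotZl (a : R) u v : vdot (a *: u) v = a * vdot u v.
Proof. by rewrite /vdot mulr_sumr; apply: eq_bigr => i _; rewrite mxE mulrA. Qed.

Lemma vdotBl u v w : vdot (u - v) w = vdot u w - vdot v w.
Proof. by rewrite vdotDl -scaleN1r vdotZl mulN1r. Qed.

Lemma vdotDr u v w : vdot w (u + v) = vdot w u + vdot w v.
Proof. by rewrite vdotC vdotDl !(vdotC w). Qed.

Lemma vdotZr (a : R) u v : vdot v (a *: u) = a * vdot v u.
Proof. by rewrite vdotC vdotZl vdotC. Qed.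

Lemma vdotBr u v w : vdot w (u - v) = vdot w u - vdot w v.
Proof. by rewrite vdotC vdotBl !(vdotC w). Qed.

Lemma vdot_suml (I : finType) (Q : pred I) (F : I -> 'rV[R]_d) v :
  vdot (\sum_(i | Q i) F i) v = \sum_(i | Q i) vdot (F i) v.
Proof.
rewrite /vdot exchange_big /=; apply: eq_bigr => j _.
by rewrite summxE mulr_suml.
Qed.

Lemma vdotxx_ge0 u : 0 <= vdot u u.
Proof. by rewrite sumr_ge0 // => i _; rewrite -expr2 sqr_ge0. Qed.

Lemma vnorm_ge0 u : 0 <= vnorm u.
Proof. exact: sqrtr_ge0. Qed.

Lemma vnorm0 : vnorm (0 : 'rV[R]_d) = 0.
Proof. by rewrite /vnorm /vdot big1 ?sqrtr0 // => i _; rewrite mxE mul0r. Qed.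

Lemma vnorm_sqr u : vnorm u ^+ 2 = vdot u u.
Proof. by rewrite sqr_sqrtr // vdotxx_ge0. Qed.

(* The discriminant of x |-> <u - x v, u - x v> >= 0 is nonpositive. *)
Lemma vdot_sqr_le u v : vdot u v ^+ 2 <= vdot u u * vdot v v.
Proof.
set a := vdot u u; set b := vdot u v; set c := vdot v v.
have quad x : 0 <= a - 2 * x * b + x ^+ 2 * c.
  have := vdotxx_ge0 (u - x *: v).
  by rewrite vdotBl !vdotBr !vdotZl !vdotZr (vdotC v u) -/a -/b -/c => h; lra.
have a_ge0 : 0 <= a := vdotxx_ge0 u.
have [c0|c_neq0] := eqVneq c 0.
  have [->|b_neq0] := eqVneq b 0; first by rewrite expr0n /= mulr_ge0 ?vdotxx_ge0.
  have := quad ((a + 1) / (2 * b)).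
  have -> : 2 * ((a + 1) / (2 * b)) * b = a + 1 by field; rewrite b_neq0.
  by rewrite c0 mulr0 addr0 => h; lra.
have c_gt0 : 0 < c by rewrite lt0r c_neq0 vdotxx_ge0.
have := quad (b / c).
have -> : 2 * (b / c) * b = 2 * (b ^+ 2 / c) by field.
have -> : (b / c) ^+ 2 * c = b ^+ 2 / c by field.
by move=> h; rewrite -ler_pdivrMr // mulrC; lra.
Qed.

Lemma normr_vdot_le u v : `|vdot u v| <= vnorm u * vnorm v.
Proof.
rewrite /vnorm -sqrtrM ?vdotxx_ge0 // -sqrtr_sqr.
by rewrite ler_sqrt ?vdot_sqr_le // mulr_ge0 ?vdotxx_ge0.
Qed.

Lemma vnormZ (a : R) u : vnorm (a *: u) = `|a| * vnorm u.
Proof.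
by rewrite /vnorm vdotZl vdotZr mulrA -expr2 sqrtrM ?sqr_ge0 // sqrtr_sqr.
Qed.

Lemma vnormD u v : vnorm (u + v) <= vnorm u + vnorm v.
Proof.
rewrite -(ger0_norm (addr_ge0 (vnorm_ge0 u) (vnorm_ge0 v))) -sqrtr_sqr.
rewrite /vnorm ler_sqrt ?sqr_ge0 // vdotDl !vdotDr (vdotC v u) sqrrD.
rewrite -/(vnorm u) -/(vnorm v) !vnorm_sqr.
by have := ler_norm (vdot u v); have := normr_vdot_le u v; lra.
Qed.

End EuclideanRow.

Definition prefix_measurable (S : finType) (A : Type) (m : nat) (G : (nat -> S) -> A) :=
  forall s s', (forall i, (i < m)%N -> s i = s' i) -> G s = G s'.

Lemma prefix_measurable_mono (S : finType) (A : Type) (m n : nat) (G : (nat -> S) -> A) :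
  (m <= n)%N -> prefix_measurable m G -> prefix_measurable n G.
Proof. by move=> mn hG s s' h; apply: hG => i im; apply: h; exact: leq_trans im mn. Qed.

Section PathExpectation.
Variables (R : realType) (S : finType) (mu : S -> R) (P : S -> S -> R).
Hypothesis mu_ge0 : forall s, 0 <= mu s.
Hypothesis P_ge0 : forall s s', 0 <= P s s'.

Lemma path_weight_ge0 N (x : {ffun 'I_N.+1 -> S}) : 0 <= path_weight mu P x.
Proof. by rewrite mulr_ge0 // prodr_ge0. Qed.

Lemma eq_Ex N F G : (forall x : {ffun 'I_N.+1 -> S}, F (path_of x) = G (path_of x)) ->
  Ex mu P N F = Ex mu P N G.
Proof. by move=> FG; apply: eq_bigr => x _; rewrite FG. Qed.

Lemma ler_Ex N F G : (forall x : {ffun 'I_N.+1 -> S}, F (path_of x) <= G (path_of x)) ->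
  Ex mu P N F <= Ex mu P N G.
Proof. by move=> FG; apply: ler_sum => x _; rewrite ler_wpM2l ?path_weight_ge0. Qed.

Lemma ExD N F G : Ex mu P N (fun s => F s + G s) = Ex mu P N F + Ex mu P N G.
Proof. by rewrite /Ex -big_split; apply: eq_bigr => x _; rewrite mulrDr. Qed.

Lemma ExB N F G : Ex mu P N (fun s => F s - G s) = Ex mu P N F - Ex mu P N G.
Proof. by rewrite /Ex -sumrB; apply: eq_bigr => x _; rewrite mulrBr. Qed.

Lemma ExZ N (a : R) F : Ex mu P N (fun s => a * F s) = a * Ex mu P N F.
Proof. by rewrite /Ex mulr_sumr; apply: eq_bigr => x _; rewrite mulrCA. Qed.

Lemma Ex_sum N (I : Type) (r : seq I) (Q : pred I) (F : I -> (nat -> S) -> R) :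
  Ex mu P N (fun s => \sum_(i <- r | Q i) F i s) = \sum_(i <- r | Q i) Ex mu P N (F i).
Proof. by rewrite /Ex exchange_big /=; apply: eq_bigr => x _; rewrite mulr_sumr. Qed.

Section LastStep.
Variable N : nat.

Definition path_snoc (p : {ffun 'I_N.+1 -> S} * S) : {ffun 'I_N.+2 -> S} :=
  [ffun i : 'I_N.+2 => if (i <= N)%N then p.1 (inord i) else p.2].

Lemma path_snoc_bij : bijective path_snoc.
Proof.
exists (fun x : {ffun 'I_N.+2 -> S} => ([ffun i : 'I_N.+1 => x (inord i)], x ord_max)).
- case=> x z; rewrite /path_snoc /=; congr pair; last by rewrite ffunE ltnn.
  apply/ffunP => i; have iN : (i < N.+2)%N by rewrite ltnS ltnW.
  rewrite !ffunE inordK // -ltnS ltn_ord.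
  by congr (x _); apply: val_inj; rewrite /= inordK.
- move=> x; apply/ffunP => i; rewrite /path_snoc !ffunE /=.
  case: ifP => iN; congr (x _); apply: val_inj => /=; first by rewrite !inordK // ltnS ltnW.
  have := ltn_ord i; rewrite ltnS leq_eqVlt => /orP[/eqP -> // |].
  by rewrite ltnS iN.
Qed.

Lemma path_of_snoc x z i : (i <= N)%N -> path_of (path_snoc (x, z)) i = path_of x i.
Proof. by move=> iN; rewrite /path_of ffunE inordK ?iN // ltnS ltnW. Qed.

Lemma path_of_snoc_last x z : path_of (path_snoc (x, z)) N.+1 = z.
Proof. by rewrite /path_of ffunE inordK ?ltnn. Qed.

Lemma path_weight_snoc x z :
  path_weight mu P (path_snoc (x, z)) = path_weight mu P x * P (path_of x N) z.
Proof.
rewrite /path_weight big_ord_recr /= path_of_snoc // path_of_snoc_last path_of_snoc //.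
rewrite -mulrA; congr (_ * (_ * _)); apply: eq_bigr => i _.
by rewrite !path_of_snoc // ltnW.
Qed.

Lemma Ex_last_step (G : (nat -> S) -> S -> R) :
  (forall z, prefix_measurable N.+1 (G^~ z)) ->
  Ex mu P N.+1 (fun s => G s (s N.+1)) = Ex mu P N (fun s => \sum_z P (s N) z * G s z).
Proof.
move=> hG; rewrite /Ex (reindex path_snoc); last exact/onW_bij/path_snoc_bij.
rewrite -(pair_big predT predT (fun x z => path_weight mu P (path_snoc (x, z)) *
   G (path_of (path_snoc (x, z))) (path_of (path_snoc (x, z)) N.+1))) /=.
apply: eq_bigr => x _; rewrite mulr_sumr; apply: eq_bigr => z _.
rewrite path_weight_snoc path_of_snoc_last -mulrA; congr (_ * (_ * _)).
by apply: hG => i iN; rewrite path_of_snoc.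
Qed.

End LastStep.

Hypothesis P_sum1 : forall s, \sum_s' P s s' = 1.

Lemma Ex_horizon N n (G : (nat -> S) -> R) : prefix_measurable N.+1 G -> (N <= n)%N ->
  Ex mu P n G = Ex mu P N G.
Proof.
move=> hG; elim: n => [|n IH]; first by rewrite leqn0 => /eqP ->.
rewrite leq_eqVlt => /orP [/eqP -> //| Nn]; rewrite -IH //.
have := @Ex_last_step n (fun s _ => G s) (fun _ => prefix_measurable_mono Nn hG) => /= ->.
by apply: eq_Ex => x; rewrite -mulr_suml P_sum1 mul1r.
Qed.

Lemma Ex_Markov_step N i (G : (nat -> S) -> S -> R) : (i < N)%N ->
  (forall z, prefix_measurable i.+1 (G^~ z)) ->
  Ex mu P N (fun s => G s (s i.+1)) = Ex mu P N (fun s => \sum_z P (s i) z * G s z).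
Proof.
move=> iN hG.
have lhs_meas : prefix_measurable i.+2 (fun s => G s (s i.+1)).
  by move=> s s' h; rewrite (h i.+1) // (hG _ s s') // => j ji; apply: h; rewrite ltnW.
have rhs_meas : prefix_measurable i.+1 (fun s => \sum_z P (s i) z * G s z).
  by move=> s s' h; rewrite (h i) //; apply: eq_bigr => z _; rewrite (hG z s s').
by rewrite (Ex_horizon lhs_meas iN) Ex_last_step // (Ex_horizon rhs_meas (ltnW iN)).
Qed.

Lemma Ex_Markov N j k (G : (nat -> S) -> S -> R) : (j <= k <= N)%N ->
  (forall z, prefix_measurable j.+1 (G^~ z)) ->
  Ex mu P N (fun s => G s (s k)) = Ex mu P N (fun s => \sum_y Pn P (k - j) (s j) y * G s y).
Proof.
have Pn0 (F : S -> R) y : \sum_z Pn P 0 y z * F z = F y.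
  rewrite (bigD1 y) //= eqxx mul1r big1 ?addr0 // => z /negbTE.
  by rewrite eq_sym => ->; rewrite mul0r.
elim: k G => [|k IH] G /andP[jk kN] hG.
  by move: jk; rewrite leqn0 => /eqP->; apply: eq_Ex => x; rewrite subnn Pn0.
move: jk; rewrite leq_eqVlt => /orP [/eqP <-| jk].
  by apply: eq_Ex => x; rewrite subnn Pn0.
rewrite Ex_Markov_step //; last by move=> z; exact: prefix_measurable_mono jk (hG z).
have jkN : (j <= k <= N)%N by rewrite -ltnS jk ltnW.
rewrite (IH (fun s y => \sum_z P y z * G s z) jkN); last first.
  by move=> y s s' h; apply: eq_bigr => z _; rewrite (hG z s s').
apply: eq_Ex => x /=; rewrite subSn //=.
under eq_bigr do rewrite mulr_sumr.
rewrite exchange_big /=; apply: eq_bigr => z _.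
by rewrite mulr_suml; apply: eq_bigr => y _; rewrite mulrA.
Qed.

End PathExpectation.

Section Tower.
Variables (R : realType) (S : finType) (mu : S -> R) (P : S -> S -> R) (d : nat).
Hypothesis mu_ge0 : forall s, 0 <= mu s.
Hypothesis P_ge0 : forall s s', 0 <= P s s'.

Lemma condEx_measurable N m (F : (nat -> S) -> 'rV[R]_d) :
  prefix_measurable m (condEx mu P N m F).
Proof.
move=> s s' h; rewrite /condEx.
have same_cell : [pred x : {ffun 'I_N.+1 -> S} | [forall i : 'I_N.+1, (i < m)%N ==> (x i == s i)]]
   =1 [pred x : {ffun 'I_N.+1 -> S} | [forall i : 'I_N.+1, (i < m)%N ==> (x i == s' i)]].
  by move=> x /=; apply: eq_forallb => i; case: ltnP => //= im; rewrite h.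
by rewrite !(eq_bigl _ _ same_cell).
Qed.

(* condEx is constant on each cell of paths agreeing on their first m states,
   where it is the path-weighted average of F over the cell. *)
Lemma Ex_vdot_condEx N m (F h : (nat -> S) -> 'rV[R]_d) : prefix_measurable m h ->
  Ex mu P N (fun s => vdot (condEx mu P N m F s) (h s)) = Ex mu P N (fun s => vdot (F s) (h s)).
Proof.
move=> hh.
pose cell (x y : {ffun 'I_N.+1 -> S}) :=
  [forall i : 'I_N.+1, (i < m)%N ==> (y i == path_of x i)].
have cellE (x y : {ffun 'I_N.+1 -> S}) :
    cell x y = [forall i : 'I_N.+1, (i < m)%N ==> (y i == x i)].
  by apply: eq_forallb => i; rewrite /path_of inord_val.
have cellC (x y : {ffun 'I_N.+1 -> S}) : cell x y = cell y x.
  by rewrite !cellE; apply: eq_forallb => i; rewrite eq_sym.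
have cellT (x y z : {ffun 'I_N.+1 -> S}) : cell x y -> cell y z -> cell x z.
  rewrite !cellE => /forallP xy /forallP yz; apply/forallP => i; apply/implyP => im.
  by move/implyP: (xy i) => /(_ im) /eqP <-; move/implyP: (yz i) => /(_ im).
have cell_h (x y : {ffun 'I_N.+1 -> S}) : cell x y -> h (path_of x) = h (path_of y).
  rewrite cellE => /forallP xy; apply: hh => i im.
  have i_le : ((inord i : 'I_N.+1) <= i)%N.
    rewrite /inord /insubd; case: insubP => [v _ -> //| _] /=; exact: leq0n.
  by move/implyP: (xy (inord i)) => /(_ (leq_ltn_trans i_le im)) /eqP; rewrite /path_of => ->.
pose w (x : {ffun 'I_N.+1 -> S}) := path_weight mu P x.
pose W x := \sum_(y | cell x y) w y.
have W_cell x y : cell x y -> W x = W y.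
  move=> xy; apply: eq_bigl => z; apply/idP/idP; last exact: cellT.
  by apply: cellT; rewrite cellC.
pose c (y : {ffun 'I_N.+1 -> S}) := vdot (F (path_of y)) (h (path_of y)).
rewrite /Ex /condEx /=.
transitivity (\sum_x \sum_y (if cell x y then w x * (W x)^-1 * (w y * c y) else 0)).
  apply: eq_bigr => x _; rewrite vdotZl vdot_suml -big_mkcond /= !mulr_sumr.
  by apply: eq_bigr => y xy; rewrite vdotZl /c (cell_h _ _ xy) !mulrA.
rewrite exchange_big /=; apply: eq_bigr => y _.
transitivity (\sum_(x | cell y x) w x * ((W y)^-1 * (w y * c y))).
  rewrite [RHS]big_mkcond /=; apply: eq_bigr => x _; rewrite -cellC.
  by case: ifP => // xy; rewrite -mulrA (W_cell _ _ xy).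
rewrite -mulr_suml -/(W y) mulrA.
have [W0|W_neq0] := eqVneq (W y) 0; last by rewrite divff // mul1r.
suff wy0 : w y = 0 by rewrite W0 -/(w y) wy0 !mul0r.
apply/eqP; rewrite eq_le path_weight_ge0 // andbT -W0 /W (bigD1 y) /=; last first.
  by rewrite cellE; apply/forallP => i; apply/implyP.
by rewrite lerDl sumr_ge0 // => z _; rewrite path_weight_ge0.
Qed.

End Tower.

Lemma sum_diff_le_tv (R : realType) (S : finType) (p q Psi : S -> R) (B : R) :
  (forall y, `|Psi y| <= B) ->
  \sum_y p y * Psi y - \sum_y q y * Psi y <= 2 * tv_dist p q * B.
Proof.
move=> PsiB; rewrite -sumrB /tv_dist mulrA divff ?mul1r ?pnatr_eq0 // mulr_suml.
apply: ler_sum => y _; rewrite -mulrBl; apply: le_trans (ler_norm _) _.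
by rewrite normrM ler_wpM2l.
Qed.

(* The bound on E<b_k, θ_k - θ*> obtained by freezing the parameter at time j,
   with L = ℓ and D = d along the trajectory. *)
Definition bias_bound (R : realType) (C alpha c : R) (eta L D : nat -> R) (j k : nat) : R :=
  2 * (C * alpha ^+ (k - j)) * (L j * D j) +
  2 * ((L k + c * D j) * \sum_(j <= i < k) eta i * L i).

Section TDSemiGradient.
Variables (R : realType) (S : finType) (d : nat) (r : S -> S -> R) (rinf gamma : R)
  (phi : S -> 'rV[R]_d) (phiinf : R) (thstar : 'rV[R]_d).
Hypothesis r_bound : forall s s', 0 <= r s s' <= rinf.
Hypothesis gamma_bound : 0 < gamma < 1.
Hypothesis phi_bound : forall s, vnorm (phi s) <= phiinf.

Local Notation g := (td_g r gamma phi).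

Definition td_ell (th : 'rV[R]_d) : R := rinf * phiinf + 2 * phiinf ^+ 2 * vnorm th.

Definition td_inner (th : 'rV[R]_d) (s s' : S) : R := vdot (g th s s') (th - thstar).

Lemma phiinf_ge0 (s : S) : 0 <= phiinf.
Proof. exact: le_trans (vnorm_ge0 _) (phi_bound s). Qed.

Lemma td_ell_ge0 (s : S) th : 0 <= td_ell th.
Proof.
have /andP[r_ge0 r_le] := r_bound s s.
have rinf_ge0 := le_trans r_ge0 r_le; have phiinf_ge0 := phiinf_ge0 s.
by rewrite /td_ell addr_ge0 ?mulr_ge0 ?exprn_ge0 ?vnorm_ge0.
Qed.

Lemma normr_vdot_phi_le s v : `|vdot (phi s) v| <= phiinf * vnorm v.
Proof. exact: le_trans (normr_vdot_le _ _) (ler_wpM2r (vnorm_ge0 _) (phi_bound s)). Qed.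

Lemma normr_td_coef_le s s' v :
  `|gamma * vdot (phi s') v - vdot (phi s) v| <= 2 * phiinf * vnorm v.
Proof.
have /andP[gamma_gt0 gamma_lt1] := gamma_bound.
have : `|gamma * vdot (phi s') v| <= phiinf * vnorm v.
  rewrite normrM gtr0_norm //; apply: le_trans (normr_vdot_phi_le s' v).
  by rewrite ler_piMl ?normr_ge0 ?ltW.
by have := normr_vdot_phi_le s v; have := ler_normB (gamma * vdot (phi s') v) (vdot (phi s) v); lra.
Qed.

Lemma vnorm_td_g_le th s s' : vnorm (g th s s') <= td_ell th.
Proof.
have /andP[r_ge0 r_le] := r_bound s s'.
rewrite /td_g vnormZ -addrA.
have coef : `|r s s' + (gamma * vdot (phi s') th - vdot (phi s) th)|
    <= rinf + 2 * phiinf * vnorm th.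
  apply: le_trans (ler_normD _ _) _; rewrite ger0_norm //.
  by apply: lerD => //; exact: normr_td_coef_le.
apply: le_trans (ler_pM (normr_ge0 _) (vnorm_ge0 _) coef (phi_bound s)) _.
by rewrite /td_ell mulrDl expr2 -!mulrA [vnorm th * _]mulrC.
Qed.

Lemma vnorm_td_g_lipschitz th th' s s' :
  vnorm (g th s s' - g th' s s') <= 2 * phiinf ^+ 2 * vnorm (th - th').
Proof.
rewrite /td_g -scalerBl vnormZ.
have -> : r s s' + gamma * vdot (phi s') th - vdot (phi s) th -
     (r s s' + gamma * vdot (phi s') th' - vdot (phi s) th') =
     gamma * vdot (phi s') (th - th') - vdot (phi s) (th - th').
  by rewrite !vdotBr; ring.
apply: le_trans (ler_pM (normr_ge0 _) (vnorm_ge0 _) (normr_td_coef_le _ _ _) (phi_bound s)) _.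
by rewrite expr2 -!mulrA [vnorm _ * _]mulrC.
Qed.

Lemma normr_td_inner_le th s s' : `|td_inner th s s'| <= td_ell th * vnorm (th - thstar).
Proof. exact: le_trans (normr_vdot_le _ _) (ler_wpM2r (vnorm_ge0 _) (vnorm_td_g_le _ _ _)). Qed.

Lemma td_inner_lipschitz th th' s s' :
  `|td_inner th s s' - td_inner th' s s'| <=
  (td_ell th + 2 * phiinf ^+ 2 * vnorm (th' - thstar)) * vnorm (th - th').
Proof.
have -> : td_inner th s s' - td_inner th' s s' =
   vdot (g th s s') (th - th') + vdot (g th s s' - g th' s s') (th' - thstar).
  by rewrite /td_inner vdotBl !vdotBr; ring.
rewrite mulrDl; apply: le_trans (ler_normD _ _) _; apply: lerD.
  exact: le_trans (normr_vdot_le _ _) (ler_wpM2r (vnorm_ge0 _) (vnorm_td_g_le _ _ _)).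
apply: le_trans (normr_vdot_le _ _) _; rewrite mulrAC.
by rewrite ler_wpM2r ?vnorm_ge0 ?vnorm_td_g_lipschitz.
Qed.

Variables (P : S -> S -> R) (pi : S -> R).
Hypothesis pi_distr : is_pdistr pi.
Hypothesis P_stoch : stochastic P.

Definition stat_avg (F : S -> S -> R) : R := \sum_a \sum_b pi a * P a b * F a b.

Lemma vdot_td_gbar th :
  vdot (td_gbar pi P r gamma phi th) (th - thstar) = stat_avg (td_inner th).
Proof.
rewrite /td_gbar vdot_suml; apply: eq_bigr => a _.
by rewrite vdot_suml; apply: eq_bigr => b _; rewrite vdotZl.
Qed.

Lemma stat_avgB_le F G B : (forall a b, F a b - G a b <= B) -> stat_avg F - stat_avg G <= B.
Proof.
have [pi_ge0 pi_sum1] := pi_distr.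
move=> FGB; rewrite -sumrB.
apply: (@le_trans _ _ (\sum_a \sum_b pi a * P a b * B)).
  apply: ler_sum => a _; rewrite -sumrB; apply: ler_sum => b _.
  by rewrite -mulrBr ler_wpM2l ?mulr_ge0 ?(P_stoch a).1.
rewrite -[leRHS]mul1r -pi_sum1 mulr_suml le_eqVlt; apply/predU1P; left.
by apply: eq_bigr => a _; rewrite -mulr_suml -mulr_sumr (P_stoch a).2 mulr1.
Qed.

Lemma td_inner_gap_shift th th' s s' :
  td_inner th s s' - stat_avg (td_inner th) <=
  td_inner th' s s' - stat_avg (td_inner th') +
  2 * ((td_ell th + 2 * phiinf ^+ 2 * vnorm (th' - thstar)) * vnorm (th - th')).
Proof.
set B := _ * vnorm (th - th').
have lip a b := td_inner_lipschitz th th' a b; rewrite -/B in lip.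
have avg : stat_avg (td_inner th') - stat_avg (td_inner th) <= B.
  by apply: stat_avgB_le => a b; move: (lip a b); rewrite ler_norml; lra.
by move: (lip s s'); rewrite ler_norml; lra.
Qed.

Variables (mu : S -> R) (C alpha : R) (eta : nat -> R).
Hypothesis mu_ge0 : forall s, 0 <= mu s.
Hypothesis mixing : forall s n, tv_dist (Pn P n s) pi <= C * alpha ^+ n.
Hypothesis eta_ge0 : forall k, 0 <= eta k.

Local Notation theta s k := (td_iter g eta s k).

Definition td_bias (s : nat -> S) (k : nat) : 'rV[R]_d :=
  condEx mu P k.+1 (if k is 0 then 0%N else k.+1)
    (fun s' => g (theta s' k) (s' k) (s' k.+1)) s
  - td_gbar pi P r gamma phi (theta s k).

Lemma td_iter_measurable k : prefix_measurable k.+1 (fun s => theta s k).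
Proof.
elim: k => [|k IH] s s' h //=.
rewrite (IH s s'); last by move=> i ik; apply: h; exact: ltnW.
by rewrite (h k) ?(h k.+1) // ltnW.
Qed.

Lemma vnorm_td_iter_drift s j k : (j <= k)%N ->
  vnorm (theta s k - theta s j) <= \sum_(j <= i < k) eta i * td_ell (theta s i).
Proof.
elim: k => [|k IH]; first by rewrite leqn0 => /eqP ->; rewrite subrr vnorm0 big_geq.
rewrite leq_eqVlt => /orP [/eqP <-| jk]; first by rewrite subrr vnorm0 big_geq.
rewrite big_nat_recr //= addrAC; apply: le_trans (vnormD _ _) _; apply: lerD; first exact: IH.
by rewrite vnormZ ger0_norm // ler_wpM2l // vnorm_td_g_le.
Qed.

Let P_ge0 s s' : 0 <= P s s'. Proof. exact: (P_stoch s).1. Qed.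
Let P_sum1 s : \sum_s' P s s' = 1. Proof. exact: (P_stoch s).2. Qed.

Lemma Ex_td_bias N k : (k < N)%N ->
  Ex mu P N (fun s => vdot (td_bias s k) (theta s k - thstar)) =
  Ex mu P N (fun s => td_inner (theta s k) (s k) (s k.+1) - stat_avg (td_inner (theta s k))).
Proof.
move=> kN; rewrite /td_bias; under eq_fun do rewrite vdotBl vdot_td_gbar.
rewrite !ExB; congr (_ - _).
set m := if k is 0 then 0%N else k.+1.
have m_le : (m <= k.+1)%N by rewrite /m; case: (k).
set G := fun s' => g (theta s' k) (s' k) (s' k.+1).
(* condEx only sees paths of length k + 2, so the tower property is applied there. *)
rewrite (@Ex_horizon _ _ _ _ P_sum1 k.+1); last 2 first.
- move=> s s' h.
  rewrite (prefix_measurable_mono (leqW m_le) (condEx_measurable mu P k.+1 G) h).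
  by rewrite (prefix_measurable_mono (leqnSn _) (@td_iter_measurable k) h).
- exact: kN.
rewrite Ex_vdot_condEx //; last first.
  by rewrite /m; case: (k) => [|k'] s s' h //; rewrite (td_iter_measurable h).
symmetry; apply: Ex_horizon => // s s' h.
rewrite /td_inner (h k) // (h k.+1) //.
by rewrite (prefix_measurable_mono (leqnSn _) (@td_iter_measurable k) h).
Qed.

Lemma Ex_td_inner_mixing N j k : (j <= k)%N -> (k < N)%N ->
  Ex mu P N (fun s =>
    td_inner (theta s j) (s k) (s k.+1) - stat_avg (td_inner (theta s j))) <=
  Ex mu P N (fun s =>
    2 * (C * alpha ^+ (k - j)) * (td_ell (theta s j) * vnorm (theta s j - thstar))).
Proof.
move=> jk kN.
pose Psi s y := \sum_z P y z * td_inner (theta s j) y z.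
have Psi_meas z : prefix_measurable j.+1 (fun s => Psi s z).
  by move=> s s' h; rewrite /Psi (td_iter_measurable h).
have inner_meas z : prefix_measurable k.+1 (fun s => td_inner (theta s j) (s k) z).
  move=> s s' h; rewrite /td_inner (h k) //.
  by rewrite (prefix_measurable_mono (jk : (j < k.+1)%N) (@td_iter_measurable j) h).
have avgE s : stat_avg (td_inner (theta s j)) = \sum_y pi y * Psi s y.
  by apply: eq_bigr => a _; rewrite /Psi mulr_sumr; apply: eq_bigr => b _; rewrite mulrA.
rewrite ExB (@Ex_Markov_step _ _ _ _ P_sum1 N k _ kN inner_meas).
rewrite (@Ex_Markov _ _ _ _ P_sum1 N j k Psi) ?jk ?(ltnW kN) // -ExB.
apply: ler_Ex => // x; set s := path_of x; rewrite avgE.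
apply: le_trans
  (@sum_diff_le_tv _ _ _ _ _ (td_ell (theta s j) * vnorm (theta s j - thstar)) _) _.
  move=> y; apply: le_trans (ler_norm_sum _ _ _) _.
  rewrite -[leRHS]mul1r -(P_sum1 y) mulr_suml; apply: ler_sum => z _.
  by rewrite normrM ger0_norm // ler_wpM2l // normr_td_inner_le.
by rewrite ler_wpM2r ?mulr_ge0 ?vnorm_ge0 ?(td_ell_ge0 (s 0)) // ler_wpM2l.
Qed.

Lemma Ex_td_bias_le N j k : (j <= k)%N -> (k < N)%N ->
  Ex mu P N (fun s => vdot (td_bias s k) (theta s k - thstar)) <=
  Ex mu P N (fun s => bias_bound C alpha (2 * phiinf ^+ 2) eta
    (fun i => td_ell (theta s i)) (fun i => vnorm (theta s i - thstar)) j k).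
Proof.
move=> jk kN; rewrite Ex_td_bias // /bias_bound /=.
apply: le_trans (_ : _ <= Ex mu P N (fun s =>
    td_inner (theta s j) (s k) (s k.+1) - stat_avg (td_inner (theta s j)) +
    2 * ((td_ell (theta s k) + 2 * phiinf ^+ 2 * vnorm (theta s j - thstar)) *
      \sum_(j <= i < k) eta i * td_ell (theta s i)))) _.
  apply: ler_Ex => // x; set s := path_of x.
  apply: le_trans (td_inner_gap_shift _ (theta s j) _ _) _.
  rewrite lerD2l ler_wpM2l // ler_wpM2l ?vnorm_td_iter_drift //.
  by rewrite addr_ge0 ?mulr_ge0 ?exprn_ge0 ?vnorm_ge0 ?(td_ell_ge0 (s 0)) ?(phiinf_ge0 (s 0)).
by rewrite [leLHS]ExD [leRHS]ExD lerD2r Ex_td_inner_mixing.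
Qed.

Lemma Ex_sum_td_bias_le N u t : (t <= N)%N ->
  Ex mu P N (fun s => \sum_(0 <= k < t) eta k * vdot (td_bias s k) (theta s k - thstar)) <=
  Ex mu P N (fun s => \sum_(0 <= k < t) eta k * bias_bound C alpha (2 * phiinf ^+ 2) eta
    (fun i => td_ell (theta s i)) (fun i => vnorm (theta s i - thstar)) (k - u) k).
Proof.
move=> tN; rewrite !Ex_sum; apply: ler_sum_nat => k /andP[_ kt].
rewrite !ExZ ler_wpM2l //.
by apply: Ex_td_bias_le; [exact: leq_subr | exact: leq_trans kt tN].
Qed.

End TDSemiGradient.

Lemma ut_mixing_le (R : realType) (C alpha : R) (t : nat) :
  0 < C -> 0 < alpha < 1 -> (1 <= t)%N ->
  C * alpha ^+ (ut C alpha t) <= 1 / Num.sqrt t%:R.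
Proof.
move=> C_gt0 /andP [alpha_gt0 alpha_lt1] t_ge1.
set u := ut C alpha t.
have sqrt_gt0 : 0 < Num.sqrt (t%:R : R) by rewrite sqrtr_gt0 ltr0n.
have lnV_gt0 : 0 < ln (alpha^-1) by rewrite ln_gt0 // invf_gt1.
have Cs_gt0 : 0 < C * Num.sqrt t%:R by rewrite mulr_gt0.
have u_ge : ln (C * Num.sqrt t%:R) <= u%:R * ln (alpha^-1).
  rewrite -ler_pdivrMr // /u /ut natr_absz ger0_norm ?le_max ?lexx //.
  by apply: le_trans (ceil_ge _) _; rewrite ler_int le_max lexx orbT.
have au_gt0 : 0 < alpha ^+ u by rewrite exprn_gt0.
rewrite ler_pdivlMr // mulrAC.
rewrite -(ler_ln (x := C * Num.sqrt t%:R * alpha ^+ u)) ?posrE ?mulr_gt0 // ln1.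
rewrite lnM ?posrE // lnXn // -(invrK alpha) lnV ?posrE ?invr_gt0 //.
by rewrite mulNrn subr_le0 -[ln alpha^-1 *+ u]mulr_natl.
Qed.

Lemma ler_sum_split (R : realType) (u t : nat) (Y Lo Hi : nat -> R) :
  (forall k, (k <= u)%N -> Y k <= Lo k) ->
  (forall k, (u < k < t)%N -> Y k <= Hi k) ->
  (forall k, 0 <= Lo k) ->
  \sum_(0 <= k < t) Y k <= \sum_(0 <= k < u.+1) Lo k + \sum_(u.+1 <= k < t) Hi k.
Proof.
move=> YLo YHi Lo_ge0; case: (leqP t u.+1) => [tu | ut].
  rewrite [X in _ + X]big_geq // addr0 (big_cat_nat (leq0n t) tu) /=.
  rewrite -[leLHS]addr0 lerD ?sumr_ge0 //.
  by apply: ler_sum_nat => k /andP[_ kt]; apply: YLo; rewrite -ltnS (leq_trans kt).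
rewrite (big_cat_nat (leq0n u.+1) (ltnW ut)) /= lerD //.
  by apply: ler_sum_nat => k /andP[_ ku]; apply: YLo.
by apply: ler_sum_nat => k /andP[uk kt]; apply: YHi; rewrite uk.
Qed.

Section StepSizeSums.
Variables (R : realType) (delta lT C alpha c : R) (u t : nat) (L D : nat -> R).
Hypotheses (delta_gt0 : 0 < delta) (lT_gt0 : 0 < lT) (C_gt0 : 0 < C).
Hypotheses (alpha_ge0 : 0 <= alpha) (alpha_le1 : alpha <= 1).
Hypothesis ut_mixing : C * alpha ^+ u <= 1 / Num.sqrt t%:R.
Hypotheses (c_ge0 : 0 <= c) (L_ge0 : forall i, 0 <= L i) (D_ge0 : forall i, 0 <= D i).

Definition td_step (k : nat) : R := 1 / (delta * lT * ln (k + 3)%:R * Num.sqrt (k + 1)%:R).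

Lemma ln_addn3_gt0 k : 0 < ln ((k + 3)%:R : R).
Proof. by rewrite ln_gt0 // ltr1n addn3. Qed.

Lemma sqrt_addn1_gt0 k : 0 < Num.sqrt ((k + 1)%:R : R).
Proof. by rewrite sqrtr_gt0 ltr0n addn1. Qed.

Lemma td_step_gt0 k : 0 < td_step k.
Proof. by rewrite divr_gt0 ?mulr_gt0 ?ln_addn3_gt0 ?sqrt_addn1_gt0. Qed.

Local Notation step_bias k :=
  (td_step k * bias_bound C alpha c td_step L D (k - u) k).

Lemma step_bias_head_le k : (k <= u)%N ->
  step_bias k <= 8 * C * (D 0 * L 0 * td_step k) + 2 / (delta ^+ 2 * lT ^+ 2) *
    ((L k + c * D 0) / (Num.sqrt (k + 1)%:R * ln (k + 3)%:R) *
     \sum_(1 <= i < k.+1) L i.-1 / (ln (i + 2)%:R * Num.sqrt i%:R)).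
Proof.
move=> ku; rewrite /bias_bound (eqP (ku : (k - u == 0)%N)) subn0.
have -> : \sum_(1 <= i < k.+1) L i.-1 / (ln (i + 2)%:R * Num.sqrt i%:R) =
    delta * lT * \sum_(0 <= i < k) td_step i * L i.
  rewrite big_add1 /= mulr_sumr; apply: eq_bigr => i _.
  rewrite /= addSnnS -[i.+1]addn1 /td_step.
  by field; rewrite ?mulf_neq0 ?lt0r_neq0 ?ln_addn3_gt0 ?sqrt_addn1_gt0.
have step_gt0 := td_step_gt0 k; have ln3 := ln_addn3_gt0 k; have sq := sqrt_addn1_gt0 k.
rewrite mulrDr lerD //.
  have X_ge0 : 0 <= C * (L 0 * D 0 * td_step k) :=
    mulr_ge0 (ltW C_gt0) (mulr_ge0 (mulr_ge0 (L_ge0 0) (D_ge0 0)) (ltW step_gt0)).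
  have a_le1 : alpha ^+ k <= 1 by rewrite exprn_ile1.
  nra.
rewrite le_eqVlt; apply/predU1P; left; rewrite /td_step.
by field; rewrite ?mulf_neq0 ?lt0r_neq0.
Qed.

Lemma sum_td_step_tail_le j k : (j <= k)%N ->
  \sum_(j <= i < k) td_step i * L i <=
  1 / (delta * lT * ln (j + 3)%:R) * \sum_(j.+1 <= i < k.+1) L i.-1 / Num.sqrt i%:R.
Proof.
move=> jk; rewrite big_add1 /= mulr_sumr; apply: ler_sum_nat => i /andP[ji _].
have lnj := ln_addn3_gt0 j; have lni := ln_addn3_gt0 i; have sq := sqrt_addn1_gt0 i.
have ln_le : ln ((j + 3)%:R : R) <= ln (i + 3)%:R.
  by rewrite ler_ln ?posrE ?ltr0n ?addn3 // ler_nat !ltnS.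
rewrite -[i.+1]addn1 /td_step.
have -> : 1 / (delta * lT * ln (i + 3)%:R * Num.sqrt (i + 1)%:R) * L i =
    L i * (delta * lT * ln (i + 3)%:R * Num.sqrt (i + 1)%:R)^-1 by rewrite div1r mulrC.
have -> : 1 / (delta * lT * ln (j + 3)%:R) * (L i / Num.sqrt (i + 1)%:R) =
    L i * (delta * lT * ln (j + 3)%:R * Num.sqrt (i + 1)%:R)^-1.
  by field; rewrite ?mulf_neq0 ?lt0r_neq0.
apply: ler_wpM2l; first exact: L_ge0.
by rewrite lef_pV2 ?posrE ?mulr_gt0 // ler_pM2r // ler_pM2l ?mulr_gt0.
Qed.

Lemma step_bias_tail_le k : (u < k < t)%N ->
  step_bias k <= 8 * (D (k - u) * L (k - u) /
      (delta * lT * ln (k + 3)%:R * Num.sqrt (k + 1)%:R * Num.sqrt t%:R)) +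
    2 / (delta ^+ 2 * lT ^+ 2) *
    ((L k + c * D (k - u)) / (ln (k + 3)%:R * ln (k - u + 3)%:R * Num.sqrt (k + 1)%:R) *
     \sum_((k - u).+1 <= i < k.+1) L i.-1 / Num.sqrt i%:R).
Proof.
move=> /andP[uk kt]; rewrite /bias_bound (subKn (ltnW uk)).
set j := (k - u)%N.
have st_gt0 : 0 < Num.sqrt (t%:R : R) by rewrite sqrtr_gt0 ltr0n (leq_ltn_trans _ kt).
have step_gt0 := td_step_gt0 k; have ln3 := ln_addn3_gt0 k; have sq := sqrt_addn1_gt0 k.
have lnj := ln_addn3_gt0 j.
rewrite mulrDr lerD //.
  apply: le_trans (_ : _ <= td_step k * (8 * (1 / Num.sqrt t%:R) * (L j * D j))) _.
    apply: ler_wpM2l; first exact: ltW.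
    apply: ler_wpM2r; first exact: mulr_ge0 (L_ge0 j) (D_ge0 j).
    have : 0 <= 1 / Num.sqrt (t%:R : R) by rewrite divr_ge0 ?ltW.
    by move: ut_mixing; set a := C * alpha ^+ u; lra.
  rewrite le_eqVlt; apply/predU1P; left; rewrite /td_step; field.
  by rewrite ?mulf_neq0 ?lt0r_neq0.
apply: le_trans (_ : _ <= td_step k * (2 * ((L k + c * D j) *
    (1 / (delta * lT * ln (j + 3)%:R) * \sum_(j.+1 <= i < k.+1) L i.-1 / Num.sqrt i%:R)))) _.
  apply: ler_wpM2l; first exact: ltW.
  apply: ler_wpM2l => //; apply: ler_wpM2l; first by rewrite addr_ge0 ?mulr_ge0.
  exact: sum_td_step_tail_le (leq_subr u k).
rewrite le_eqVlt; apply/predU1P; left; rewrite /td_step; field.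
by rewrite ?mulf_neq0 ?lt0r_neq0.
Qed.

Lemma sum_step_bias_le :
  \sum_(0 <= k < t) step_bias k <=
  8 * C * (D 0 * L 0 * \sum_(0 <= k < u.+1) td_step k)
  + 8 * \sum_(u.+1 <= k < t) D (k - u) * L (k - u) /
      (delta * lT * ln (k + 3)%:R * Num.sqrt (k + 1)%:R * Num.sqrt t%:R)
  + 2 / (delta ^+ 2 * lT ^+ 2) * \sum_(0 <= k < u.+1)
      (L k + c * D 0) / (Num.sqrt (k + 1)%:R * ln (k + 3)%:R) *
      \sum_(1 <= i < k.+1) L i.-1 / (ln (i + 2)%:R * Num.sqrt i%:R)
  + 2 / (delta ^+ 2 * lT ^+ 2) * \sum_(u.+1 <= k < t)
      (L k + c * D (k - u)) / (ln (k + 3)%:R * ln (k - u + 3)%:R * Num.sqrt (k + 1)%:R) *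
      \sum_((k - u).+1 <= i < k.+1) L i.-1 / Num.sqrt i%:R.
Proof.
rewrite !mulr_sumr -addrA addrACA -!big_split /=.
apply: ler_sum_split => [k /step_bias_head_le | k /step_bias_tail_le | k] //.
have ln_ge0 i : 0 <= ln ((i + 2)%:R : R) by rewrite ln_ge0 // ler1n addn2.
apply: addr_ge0.
  apply: mulr_ge0; first exact: mulr_ge0 (ler0n _ 8) (ltW C_gt0).
  exact: mulr_ge0 (mulr_ge0 (D_ge0 0) (L_ge0 0)) (ltW (td_step_gt0 k)).
apply: mulr_ge0.
  exact: divr_ge0 (ler0n _ 2) (mulr_ge0 (exprn_ge0 2 (ltW delta_gt0)) (exprn_ge0 2 (ltW lT_gt0))).
apply: mulr_ge0; last first.
  by apply: sumr_ge0 => i _; exact: divr_ge0 (L_ge0 _) (mulr_ge0 (ln_ge0 i) (sqrtr_ge0 _)).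
exact: divr_ge0 (addr_ge0 (L_ge0 k) (mulr_ge0 c_ge0 (D_ge0 0)))
  (mulr_ge0 (sqrtr_ge0 _) (ltW (ln_addn3_gt0 k))).
Qed.

End StepSizeSums.

Theorem lemmaB1 (R : realType) (S : finType) (d : nat)
  (P : S -> S -> R) (pi : S -> R) (mu : S -> R) (C alpha : R)
  (r : S -> S -> R) (rinf gamma : R) (phi : S -> 'rV[R]_d) (phiinf : R)
  (thstar : 'rV[R]_d) (delta : R) (T t : nat) :
  stochastic P -> irreducible P -> aperiodic P -> stationary P pi ->
  0 < C -> 0 < alpha < 1 ->
  (forall (s : S) (n : nat), tv_dist (Pn P n s) pi <= C * alpha ^+ n) ->
  (forall s s', 0 <= r s s' <= rinf) -> 0 < gamma < 1 ->
  (forall s, vnorm (phi s) <= phiinf) ->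
  td_gbar pi P r gamma phi thstar = 0 ->
  is_pdistr mu ->
  0 < delta -> (2 <= T)%N -> (1 <= t <= T)%N ->
  let eta := fun k : nat =>
    1 / (delta * ln T%:R * ln (k + 3)%:R * Num.sqrt (k + 1)%:R) in
  let g := td_g r gamma phi in
  let theta := fun s : nat -> S => td_iter g eta s in
  let dd := fun (s : nat -> S) (k : nat) => vnorm (theta s k - thstar) in
  let ell := fun (s : nat -> S) (k : nat) =>
    rinf * phiinf + 2 * phiinf ^+ 2 * vnorm (theta s k) in
  let b := fun (s : nat -> S) (k : nat) =>
    condEx mu P k.+1 (if k is 0 then 0%N else k.+1)
      (fun s' => g (theta s' k) (s' k) (s' k.+1)) s
    - td_gbar pi P r gamma phi (theta s k) in
  let u := ut C alpha t in
  let E := Ex mu P (t + u).+1 in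
  E (fun s => \sum_(0 <= k < t) eta k * vdot (b s k) (theta s k - thstar))
  <= 8 * C * E (fun s => dd s 0 * ell s 0 *
         \sum_(0 <= k < u.+1)
           1 / (delta * ln T%:R * ln (k + 3)%:R * Num.sqrt (k + 1)%:R))
   + 8 * E (fun s => \sum_(u.+1 <= k < t)
           dd s (k - u)%N * ell s (k - u)%N /
           (delta * ln T%:R * ln (k + 3)%:R * Num.sqrt (k + 1)%:R * Num.sqrt t%:R))
   + 2 / (delta ^+ 2 * ln T%:R ^+ 2) *
       E (fun s => \sum_(0 <= k < u.+1)
           (ell s k + 2 * phiinf ^+ 2 * dd s 0) / (Num.sqrt (k + 1)%:R * ln (k + 3)%:R)
           * \sum_(1 <= i < k.+1) ell s i.-1 / (ln (i + 2)%:R * Num.sqrt i%:R))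
   + 2 / (delta ^+ 2 * ln T%:R ^+ 2) *
       E (fun s => \sum_(u.+1 <= k < t)
           (ell s k + 2 * phiinf ^+ 2 * dd s (k - u)%N)
             / (ln (k + 3)%:R * ln (k - u + 3)%N%:R * Num.sqrt (k + 1)%:R)
           * \sum_((k - u).+1 <= i < k.+1) ell s i.-1 / Num.sqrt i%:R).
Proof.
move=> P_stoch _ _ [pi_distr _] C_gt0 alpha_bd mixing r_bd gamma_bd phi_bd _ [mu_ge0 _]
  delta_gt0 T_ge2 /andP[t_ge1 _]; cbv zeta.
set u := ut C alpha t.
set eta := fun k : nat => 1 / (delta * ln T%:R * ln (k + 3)%:R * Num.sqrt (k + 1)%:R).
set theta := td_iter (td_g r gamma phi) eta.
have lT_gt0 : 0 < ln (T%:R : R) by rewrite ln_gt0 // ltr1n.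
have eta_ge0 k : 0 <= eta k := ltW (td_step_gt0 delta_gt0 lT_gt0 k).
have /andP[alpha_gt0 alpha_lt1] := alpha_bd.
apply: le_trans (Ex_sum_td_bias_le thstar r_bd gamma_bd phi_bd pi_distr P_stoch mu_ge0
  mixing eta_ge0 u (leqW (leq_addr u t))) _.
rewrite -!ExZ -!ExD; apply: (ler_Ex mu_ge0 (fun s => (P_stoch s).1)) => x.
set s := path_of x.
apply: (sum_step_bias_le (L := fun i => td_ell rinf phiinf (theta s i))
  (D := fun i => vnorm (theta s i - thstar))) => //.
- exact: ltW.
- exact: ltW.
- exact: ut_mixing_le.
- by rewrite mulr_ge0 ?exprn_ge0 ?(phiinf_ge0 phi_bd (s 0)).
- by move=> i; exact: td_ell_ge0 r_bd phi_bd (s 0) _.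
- by move=> i; exact: vnorm_ge0.
Qed.
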